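(* Let $(R,\mathfrak{m})$ be a Noetherian local ring and let $\varphi$ be a self-map of finite length of $R$. For $n\ge1$, $\varphi(\ker\varphi^n)\subseteq\ker\varphi^n$; let $\overline\varphi_n$ be the local self-map induced by $\varphi$ on $R/\ker\varphi^n$. Then: (a) $h_{\mathrm{alg}}(\varphi,R)=h_{\mathrm{alg}}(\overline\varphi_n,R/\ker\varphi^n)$ for every $n\ge1$; (b) for all sufficiently large $n$, $\overline\varphi_n$ is injective; (c) if $\varphi$ is integral (i.e. $R$ is integral over $\varphi(R)$), then $\overline\varphi_n$ is integral.
   Context: A self-map of finite length of a Noetherian local ring $(A,\mathfrak{n})$ is a ring endomorphism $\psi$ with $\psi(\mathfrak{n})\subseteq\mathfrak{n}$ and $\psi(\mathfrak{n})A$ $\mathfrak{n}$-primary. Put $\lambda(\psi^n):=\ell_A(A/\psi^n(\mathfrak{n})A)$; the algebraic entropy is $h_{\mathrm{alg}}(\psi,A):=\lim_{n\to\infty}\frac1n\log\lambda(\psi^n)$ (the limit exists). *)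

From HB Require Import structures.
From Stdlib Require Import Reals ClassicalEpsilon.
From mathcomp Require Import all_boot all_order all_algebra.
Set Implicit Arguments. Unset Strict Implicit. Unset Printing Implicit Defensive.
Import GRing.Theory.

Section Defs.
Variable A : comUnitRingType.
Local Open Scope ring_scope.

Definition is_ideal (I : A -> Prop) : Prop :=
  I 0 /\ (forall x y, I x -> I y -> I (x - y)) /\ (forall a x, I x -> I (a * x)).

Definition subset_of (I J : A -> Prop) : Prop := forall x, I x -> J x.

Definition gen_ideal (X : A -> Prop) : A -> Prop :=
  fun x => forall J, is_ideal J -> subset_of X J -> J x.

Definition is_maximal_ideal (M : A -> Prop) : Prop :=
  is_ideal M /\ ~ M 1 /\
  forall J, is_ideal J -> subset_of M J -> (subset_of J M \/ J 1).

Definition is_local : Prop :=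
  exists M, is_maximal_ideal M /\
    forall M', is_maximal_ideal M' -> (subset_of M M' /\ subset_of M' M).

Definition is_noetherian : Prop :=
  forall I : nat -> A -> Prop, (forall n, is_ideal (I n)) ->
    (forall n, subset_of (I n) (I n.+1)) ->
    exists N : nat, forall n : nat, (N <= n)%N -> subset_of (I n) (I N).

(* The maximal ideal of a local ring = the set of non-units. *)
Definition max_ideal : A -> Prop := fun x => ~ (x \is a GRing.unit).

Definition is_max_primary (Q : A -> Prop) : Prop :=
  is_ideal Q /\ ~ Q 1 /\
  (forall x y, Q (x * y) -> ~ Q x -> exists k, Q (y ^+ k)) /\
  (forall x, (exists k, Q (x ^+ k)) <-> max_ideal x).

Definition image_of (f : A -> A) (X : A -> Prop) : A -> Prop :=
  fun y => exists x, X x /\ y = f x.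

Definition finite_length_selfmap (psi : {rmorphism A -> A}) : Prop :=
  subset_of (image_of psi max_ideal) max_ideal /\
  is_max_primary (gen_ideal (image_of psi max_ideal)).

(* Strict chain of ideals I = J_0 < J_1 < ... < J_k = A; such chains
   correspond to strict chains of submodules 0 < ... < A/I of the A-module A/I. *)
Definition chain_of_length (I : A -> Prop) (k : nat) : Prop :=
  exists J : nat -> A -> Prop,
    (forall i, (i <= k)%N -> is_ideal (J i)) /\
    (forall x, J 0%N x <-> I x) /\
    (forall x, J k x) /\
    (forall i, (i < k)%N -> subset_of (J i) (J i.+1) /\ ~ subset_of (J i.+1) (J i)).

Definition length_is (I : A -> Prop) (n : nat) : Prop :=
  chain_of_length I n /\ forall k, chain_of_length I k -> (k <= n)%N.

(* ell_A(A/I) (meaningful when finite) *)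
Definition ell (I : A -> Prop) : nat :=
  epsilon (inhabits 0%N) (fun n => length_is I n).

Definition lambda_iter (psi : {rmorphism A -> A}) (n : nat) : nat :=
  ell (gen_ideal (image_of (iter n psi) max_ideal)).

Definition h_alg (psi : {rmorphism A -> A}) : R :=
  epsilon (inhabits R0)
    (fun h : R => Un_cv (fun k => Rdiv (ln (INR (lambda_iter psi k.+1))) (INR k.+1)) h).

Definition integral_selfmap (psi : {rmorphism A -> A}) : Prop :=
  forall x : A, exists q : {poly A}, q \is monic /\ root (map_poly psi q) x.

End Defs.

(* Lengths are computed through flags: a flag of an ideal [I] is a sequence
   [g_1, ..., g_k] such that [m g_i] lies in [I + (g_1, ..., g_(i-1))] and the
   last ideal is [A].  Each step has length at most one, so every strict chain
   above [I] has at most [k] steps ([chain_le_flag]); conversely, in a local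
   ring a maximal chain of length [l] gives a flag of size [l]
   ([length_flag]).  Flags of [I : x] and [I + Ax] combine into a flag of [I],
   which shows that [m]-primary ideals of a Noetherian ring have flags, and
   flags of [J] and of [f(m)B] multiply into a flag of [f(J)B]
   ([flag_extension]).  For the quotient [pi : A -> S] by [ker phi^n] and the
   induced [psi] this gives
     lambda(psi^k) <= lambda(phi^k)   and   lambda(phi^(n+k)) <= lambda(phi^n) lambda(psi^k),
   whence equal logarithmic growth rates (a).  Part (b) is the ascending chain
   condition for the kernels [ker phi^k], and (c) maps monic equations
   through [pi]. *)
From Stdlib Require Import Reals Lra Lia.

Section GrowthRates.
Local Open Scope R_scope.

Definition average (p : nat -> R) (k : nat) : R := p k / INR (S k).

Lemma INR_succ_pos (k : nat) : 0 < INR (S k).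
Proof. apply lt_0_INR; lia. Qed.

Lemma cv_const (c : R) : Un_cv (fun _ => c) c.
Proof. intros eps Heps; exists 0%nat; intros; unfold R_dist; rewrite Rminus_diag, Rabs_R0; lra. Qed.

Lemma cv_inv_succ : Un_cv (fun k => / INR (S k)) 0.
Proof.
apply (cv_infty_cv_0 (fun k => INR (S k))).
intro M; destruct (INR_unbounded M) as [N HN]; exists N; intros k Hk.
apply Rlt_le_trans with (INR N); [lra | apply le_INR; lia].
Qed.

Lemma Un_cv_squeeze (l u w : nat -> R) (h : R) :
  (forall k, l k <= u k) -> (forall k, u k <= w k) ->
  Un_cv l h -> Un_cv w h -> Un_cv u h.
Proof.
intros Hlu Huw Hl Hw eps Heps.
destruct (Hl eps Heps) as [N1 HN1], (Hw eps Heps) as [N2 HN2].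
exists (max N1 N2); intros k Hk.
assert (Bl := HN1 k ltac:(lia)); assert (Bw := HN2 k ltac:(lia)).
unfold R_dist in *; apply Rabs_def2 in Bl; apply Rabs_def2 in Bw.
specialize (Hlu k); specialize (Huw k); apply Rabs_def1; lra.
Qed.

(* Shifting the numerator by a fixed [n] does not change the limit of the
   averages, since [(k+n+1)/(k+1) -> 1]. *)
Lemma average_shift (p : nat -> R) (n : nat) (h : R) :
  Un_cv (average p) h <-> Un_cv (fun k => p (k + n)%nat / INR (S k)) h.
Proof.
assert (Hsucc : forall k, INR (S (k + n)) = INR (S k) + INR n)
  by (intro k; rewrite <- plus_INR; f_equal).
split; intro H.
- assert (Hratio : Un_cv (fun k => 1 + INR n * / INR (S k)) (1 + INR n * 0))
    by (apply CV_plus; [apply cv_const | apply CV_mult; [apply cv_const | apply cv_inv_succ]]).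
  assert (Hprod := CV_mult _ _ _ _ (CV_shift' _ n _ H) Hratio).
  rewrite Rmult_0_r, Rplus_0_r, Rmult_1_r in Hprod.
  refine (Un_cv_ext _ _ _ _ Hprod); intro k; unfold average; rewrite Hsucc.
  assert (Pk := INR_succ_pos k); assert (Pn := pos_INR n); field; lra.
- apply (CV_shift _ n).
  assert (Hratio : Un_cv (fun k => 1 - INR n * / INR (S (k + n))) (1 - INR n * 0))
    by (apply CV_minus; [apply cv_const | apply CV_mult;
          [apply cv_const | apply (CV_shift' _ n _ cv_inv_succ)]]).
  assert (Hprod := CV_mult _ _ _ _ H Hratio).
  rewrite Rmult_0_r, Rminus_0_r, Rmult_1_r in Hprod.
  refine (Un_cv_ext _ _ _ _ Hprod); intro k; unfold average; rewrite Hsucc.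
  assert (Pk := INR_succ_pos k); assert (Pn := pos_INR n); field; lra.
Qed.

Lemma average_compare (p q : nat -> R) (n : nat) (c : R) :
  (forall k, q k <= p k) -> (forall k, p (k + n)%nat <= c + q k) ->
  forall h, Un_cv (average p) h <-> Un_cv (average q) h.
Proof.
intros Hqp Hpq h.
assert (Hc : Un_cv (fun k => c / INR (S k)) 0)
  by (rewrite <- (Rmult_0_r c); apply CV_mult; [apply cv_const | apply cv_inv_succ]).
assert (Hscale : forall x y k, x <= y -> x / INR (S k) <= y / INR (S k))
  by (intros x y k Hxy; apply Rmult_le_compat_r;
      [left; apply Rinv_0_lt_compat, INR_succ_pos | exact Hxy]).
split; intro H.
- apply (Un_cv_squeeze (fun k => p (k + n)%nat / INR (S k) - c / INR (S k)) _ (average p)).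
  + intro k; unfold average; replace (p (k + n)%nat / INR (S k) - c / INR (S k))
      with ((p (k + n)%nat - c) / INR (S k)) by (unfold Rdiv; ring).
    apply Hscale; specialize (Hpq k); lra.
  + intro k; apply Hscale, Hqp.
  + replace h with (h - 0) by ring; apply CV_minus; [apply average_shift |]; assumption.
  + exact H.
- apply (average_shift p n).
  apply (Un_cv_squeeze (fun k => q (k + n)%nat / INR (S k)) _
          (fun k => c / INR (S k) + average q k)).
  + intro k; apply Hscale, Hqp.
  + intro k; unfold average; replace (c / INR (S k) + q k / INR (S k))
      with ((c + q k) / INR (S k)) by (unfold Rdiv; ring).
    apply Hscale, Hpq.
  + apply average_shift, H.
  + replace h with (0 + h) by ring; apply CV_plus; assumption.
Qed.

Lemma log_growth_compare (a b : nat -> nat) (n : nat) :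
  (forall k, (1 <= b k)%nat) -> (forall k, (b k <= a k)%nat) ->
  (forall k, (a (n + k) <= a n * b k)%nat) ->
  forall h, Un_cv (fun k => ln (INR (a (S k))) / INR (S k)) h <->
            Un_cv (fun k => ln (INR (b (S k))) / INR (S k)) h.
Proof.
intros Hb1 Hba Hab.
assert (Hpos : forall m, 0 < INR (b m)) by (intro m; apply lt_0_INR; specialize (Hb1 m); lia).
assert (Hln : forall x y, 0 < x -> x <= y -> ln x <= ln y)
  by (intros x y Hx [Hxy | ->]; [left; apply ln_increasing | right]; auto).
apply (average_compare (fun k => ln (INR (a (S k)))) (fun k => ln (INR (b (S k)))) n
         (ln (INR (a n)))).
- intro k; apply Hln; [apply Hpos | apply le_INR, Hba].
- intro k; rewrite <- ln_mult, <- mult_INR.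
  + apply Hln; [apply lt_0_INR; specialize (Hba (S (k + n))); specialize (Hb1 (S (k + n))); lia |].
    apply le_INR; replace (S (k + n)) with (n + S k)%nat by lia; apply Hab.
  + apply lt_0_INR; specialize (Hba n); specialize (Hb1 n); lia.
  + apply Hpos.
Qed.

End GrowthRates.

From HB Require Import structures.
From mathcomp Require Import all_boot all_order all_algebra.
From Stdlib Require Import ClassicalEpsilon Classical FunctionalExtensionality PropExtensionality.
From mathcomp Require Import ring zify.
Set Implicit Arguments. Unset Strict Implicit. Unset Printing Implicit Defensive.
Import GRing.Theory.

Definition decide (P : Prop) : bool := if excluded_middle_informative P then true else false.

Lemma decideP (P : Prop) : reflect P (decide P).
Proof. by rewrite /decide; case: excluded_middle_informative => H; constructor. Qed.

Section Ideals.
Variable A : comUnitRingType.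
Local Open Scope ring_scope.
Implicit Types (I J K X : A -> Prop) (x y g : A).

Lemma ideal0 I : is_ideal I -> I 0. Proof. by case. Qed.

Lemma idealB I x y : is_ideal I -> I x -> I y -> I (x - y).
Proof. by case=> _ [H _]; apply: H. Qed.

Lemma idealMl I a x : is_ideal I -> I x -> I (a * x).
Proof. by case=> _ [_ H]; apply: H. Qed.

Lemma idealMr I a x : is_ideal I -> I x -> I (x * a).
Proof. by move=> HI Hx; rewrite mulrC; apply: idealMl. Qed.

Lemma idealN I x : is_ideal I -> I x -> I (- x).
Proof. by move=> HI Hx; rewrite -sub0r; apply: idealB => //; apply: ideal0. Qed.

Lemma idealD I x y : is_ideal I -> I x -> I y -> I (x + y).
Proof. by move=> HI Hx Hy; rewrite -(opprK y); apply: idealB => //; apply: idealN. Qed.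

Lemma ideal_full I x : is_ideal I -> I 1 -> I x.
Proof. by move=> HI H1; rewrite -(mulr1 x); apply: idealMl. Qed.

Lemma gen_is_ideal X : is_ideal (gen_ideal X).
Proof.
split; first by move=> J HJ _; apply: ideal0.
split; first by move=> x y Hx Hy J HJ HX; apply: idealB => //; [apply: Hx | apply: Hy].
by move=> a x Hx J HJ HX; apply: idealMl => //; apply: Hx.
Qed.

Lemma gen_sub X : subset_of X (gen_ideal X).
Proof. by move=> x Hx J HJ HX; apply: HX. Qed.

Lemma gen_min X J : is_ideal J -> subset_of X J -> subset_of (gen_ideal X) J.
Proof. by move=> HJ HX x Hx; apply: Hx. Qed.

Lemma colon_ideal I x : is_ideal I -> is_ideal (fun y => I (y * x)).
Proof.
move=> HI; split; first by rewrite mul0r; apply: ideal0.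
split; first by move=> y z Hy Hz; rewrite mulrBl; apply: idealB.
by move=> a y Hy; rewrite -mulrA; apply: idealMl.
Qed.

Definition adjoin I g : A -> Prop := fun x => exists a, I (x - a * g).

Lemma adjoin_ideal I g : is_ideal I -> is_ideal (adjoin I g).
Proof.
move=> HI; split; first by exists 0; rewrite mul0r subr0; apply: ideal0.
split.
  move=> x y [a Ha] [b Hb]; exists (a - b).
  have -> : x - y - (a - b) * g = (x - a * g) - (y - b * g) by ring.
  exact: idealB.
move=> c x [a Ha]; exists (c * a).
have -> : c * x - c * a * g = c * (x - a * g) by ring.
exact: idealMl.
Qed.

Lemma adjoin_sub I g : is_ideal I -> subset_of I (adjoin I g).
Proof. by move=> HI x Hx; exists 0; rewrite mul0r subr0. Qed.

Lemma adjoin_gen I g : is_ideal I -> adjoin I g g.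
Proof. by move=> HI; exists 1; rewrite mul1r subrr; apply: ideal0. Qed.

Lemma adjoin_mono I I' g : subset_of I I' -> subset_of (adjoin I g) (adjoin I' g).
Proof. by move=> H x [a Ha]; exists a; apply: H. Qed.

Lemma adjoin_min I J g : is_ideal J -> subset_of I J -> J g -> subset_of (adjoin I g) J.
Proof.
move=> HJ HIJ Hg x [a Ha]; have -> : x = (x - a * g) + a * g by ring.
by apply: idealD => //; [apply: HIJ | apply: idealMl].
Qed.

End Ideals.

Section Flags.
Variable A : comUnitRingType.
Local Open Scope ring_scope.
Implicit Types (I J K : A -> Prop) (g : A) (s : seq A).

(* [step I g]: the maximal ideal kills [g] modulo [I], so that [(I + Ag)/I]
   has length at most one. *)
Definition step I g : Prop := forall a, @max_ideal A a -> I (a * g).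

(* A flag of [I] is a sequence of such steps leading from [I] to the unit
   ideal; it witnesses that [A/I] has length at most [size s]. *)
Fixpoint flag I s : Prop :=
  if s is g :: s' then step I g /\ flag (adjoin I g) s' else I 1.

Fixpoint simple_steps I s : Prop :=
  if s is g :: s' then step I g /\ simple_steps (adjoin I g) s' else True.

Fixpoint adjoin_seq I s : A -> Prop :=
  if s is g :: s' then adjoin_seq (adjoin I g) s' else I.

Lemma flag_cat I s1 s2 :
  flag I (s1 ++ s2) <-> simple_steps I s1 /\ flag (adjoin_seq I s1) s2.
Proof. by elim: s1 I => [|g s1 IH] I /=; [tauto | rewrite IH; tauto]. Qed.

Lemma flagE I s : flag I s <-> simple_steps I s /\ adjoin_seq I s 1.
Proof. by have := flag_cat I s [::]; rewrite cats0. Qed.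

Lemma adjoin_seq_ideal I s : is_ideal I -> is_ideal (adjoin_seq I s).
Proof. by elim: s I => [|g s IH] I HI //=; apply/IH/adjoin_ideal. Qed.

Lemma adjoin_seq_sub I s : is_ideal I -> subset_of I (adjoin_seq I s).
Proof.
elim: s I => [|g s IH] I HI //= x Hx.
by apply: IH; [apply: adjoin_ideal | apply: adjoin_sub].
Qed.

Lemma flag_mono I I' s : subset_of I I' -> flag I s -> flag I' s.
Proof.
elim: s I I' => [|g s IH] I I' HII' /=; first exact: HII'.
case=> Hstep Hflag; split; first by move=> a Ha; apply/HII'/Hstep.
by apply: IH Hflag; apply: adjoin_mono.
Qed.

Lemma adjoin_merge I g C C' :
  step I g -> subset_of I C -> subset_of C C' ->
  is_ideal C -> is_ideal C' ->
  subset_of (adjoin C' g) (adjoin C g) -> ~ subset_of C' C -> C' g /\ ~ C g.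
Proof.
move=> Hstep HIC HCC' HC HC' Hmerge HCC'strict.
have [y [C'y nCy]] : exists y, C' y /\ ~ C y.
  apply: NNPP => Hn; apply: HCC'strict => x Hx; apply: NNPP => Hx'.
  by apply: Hn; exists x.
have [a Ha] := Hmerge y (adjoin_sub g HC' C'y).
have Hy : y = (y - a * g) + a * g by rewrite subrK.
have [Hunit | Hnonunit] := boolP (a \is a GRing.unit); last first.
  by case: nCy; rewrite Hy; apply: idealD => //; apply/HIC/Hstep/negP.
split.
  have -> : g = a^-1 * (y - (y - a * g)) by rewrite opprB addrC subrK mulKr.
  by apply: idealMl => //; apply: idealB => //; apply: HCC'.
by move=> Cg; apply: nCy; rewrite Hy; apply: idealD => //; apply: idealMl.
Qed.

Fixpoint count_strict (C : nat -> A -> Prop) (k : nat) : nat :=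
  if k is k'.+1 then (count_strict C k' + decide (~ subset_of (C k'.+1) (C k')))%N
  else 0%N.

Lemma count_strict_full (C : nat -> A -> Prop) k :
  (forall i, (i <= k)%N -> C i 1) -> (forall i, (i <= k)%N -> is_ideal (C i)) ->
  count_strict C k = 0%N.
Proof.
elim: k => [|k IH] Hfull Hideal //=.
have Hfull' i : (i <= k)%N -> C i 1 by move/leqW; apply: Hfull.
have Hideal' i : (i <= k)%N -> is_ideal (C i) by move/leqW; apply: Hideal.
rewrite IH //.
by case: decideP => // -[] x _; apply: ideal_full; [apply: Hideal | apply: Hfull].
Qed.

Lemma count_strict_all (C : nat -> A -> Prop) k :
  (forall i, (i < k)%N -> ~ subset_of (C i.+1) (C i)) -> count_strict C k = k.
Proof.
elim: k => [|k IH] Hstrict //=.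
rewrite IH => [|i Hi]; last by apply: Hstrict; apply: ltnW.
by case: decideP => [_|[]]; [rewrite addn1 | apply: Hstrict].
Qed.

(* One step of a chain: strictness lost after adjoining [g] is paid for by
   [g] entering the chain. *)
Lemma count_step_adjoin I g C C' :
  step I g -> subset_of I C -> subset_of C C' ->
  is_ideal C -> is_ideal C' ->
  (decide (~ subset_of C' C) + decide (C g) <=
   decide (~ subset_of (adjoin C' g) (adjoin C g)) + decide (C' g))%N.
Proof.
move=> Hstep HIC HCC' HC HC'.
have HCg : (decide (C g) <= decide (C' g))%N.
  by case: (decideP (C g)) => // /HCC' /decideP ->.
case: (decideP (~ subset_of (adjoin C' g) (adjoin C g))) => [_|Hmerge].
  by apply: leq_add => //; apply: leq_b1.
case: (decideP (~ subset_of C' C)) => [Hstrict|_]; last by rewrite !add0n.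
have [C'g nCg] := adjoin_merge Hstep HIC HCC' HC HC' (NNPP _ Hmerge) Hstrict.
by rewrite (introF (decideP _) nCg) (introT (decideP _) C'g).
Qed.

Section Chain.
Variables (I : A -> Prop) (C : nat -> A -> Prop) (k : nat).
Hypothesis HC : forall i, (i <= k)%N -> is_ideal (C i).
Hypothesis HIC : subset_of I (C 0%N).
Hypothesis HCmono : forall i, (i < k)%N -> subset_of (C i) (C i.+1).

Lemma chain_above i : (i <= k)%N -> subset_of I (C i).
Proof.
elim: i => [|i IH] Hi x Hx; first exact: HIC.
exact: (HCmono Hi (IH (ltnW Hi) x Hx)).
Qed.

(* Telescoping [count_step_adjoin] along the chain. *)
Lemma count_strict_adjoin g : step I g ->
  (count_strict C k + decide (C 0%N g) <=
   count_strict (fun i => adjoin (C i) g) k + decide (C k g))%N.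
Proof.
move=> Hstep; elim: k HC HCmono chain_above => [|j IH] HCj Hmono Habove //=.
have := IH (fun i Hi => HCj i (leqW Hi)) (fun i Hi => Hmono i (leqW Hi))
  (fun i Hi => Habove i (leqW Hi)).
have := count_step_adjoin Hstep (Habove j (leqnSn j)) (Hmono j (leqnn _))
  (HCj j (leqnSn j)) (HCj j.+1 (leqnn _)).
lia.
Qed.

End Chain.

Lemma count_strict_le_flag s : forall I (C : nat -> A -> Prop) k,
  is_ideal I -> flag I s ->
  (forall i, (i <= k)%N -> is_ideal (C i)) -> subset_of I (C 0%N) ->
  (forall i, (i < k)%N -> subset_of (C i) (C i.+1)) -> (count_strict C k <= size s)%N.
Proof.
elim: s => [|g s IH] I C k HI /=.
  move=> H1 HC HIC Hmono; rewrite count_strict_full // => i Hi.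
  by apply: (chain_above HIC Hmono Hi); apply: H1.
case=> Hstep Hflag HC HIC Hmono.
have := count_strict_adjoin HC HIC Hmono Hstep.
have := IH (adjoin I g) (fun i => adjoin (C i) g) k (adjoin_ideal g HI) Hflag
  (fun i Hi => adjoin_ideal g (HC i Hi)) (adjoin_mono HIC)
  (fun i Hi => adjoin_mono (Hmono i Hi)).
have := leq_b1 (decide (C k g)); lia.
Qed.

Lemma chain_le_flag I s k : is_ideal I -> flag I s -> chain_of_length I k -> (k <= size s)%N.
Proof.
move=> HI Hflag [J [HJ [HJ0 [_ Hstrict]]]].
rewrite -(@count_strict_all J k) => [|i Hi]; last by case: (Hstrict i Hi).
apply: (@count_strict_le_flag s I J k HI Hflag HJ) => [x /HJ0 // | i Hi].
by case: (Hstrict i Hi).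
Qed.

End Flags.

Section Length.
Variable A : comUnitRingType.
Local Open Scope ring_scope.
Implicit Types (I J K : A -> Prop) (g : A) (s : seq A).

Lemma chain_proper I : is_ideal I -> ~ I 1 -> chain_of_length I 1.
Proof.
move=> HI HI1; exists (fun i => if i == 0%N then I else fun _ => True).
split; first by case=> [|[|]].
do 2 split => //; case=> // _; split => // Hsub.
exact/HI1/(Hsub 1).
Qed.

Lemma chain_unit I : is_ideal I -> I 1 -> chain_of_length I 0.
Proof.
move=> HI HI1; exists (fun _ => I); do 3 split => //.
by move=> x; apply: ideal_full.
Qed.

Lemma length_is_ell I s : is_ideal I -> flag I s -> length_is I (ell I).
Proof.
move=> HI Hflag; rewrite /ell; apply: epsilon_spec.
pose P k := decide (chain_of_length I k).
have HP : exists k, P k.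
  have [HI1 | HI1] := classic (I 1).
    by exists 0%N; apply/decideP/chain_unit.
  by exists 1%N; apply/decideP/chain_proper.
have HPbound k : P k -> (k <= size s)%N by move/decideP; apply: chain_le_flag.
case: (ex_maxnP HP HPbound) => l /decideP Hl Hmax.
by exists l; split => // k Hk; apply/Hmax/decideP.
Qed.

Lemma ell_le_flag I s : is_ideal I -> flag I s -> (ell I <= size s)%N.
Proof. by move=> HI Hflag; apply: (chain_le_flag HI Hflag); case: (length_is_ell HI Hflag). Qed.

Lemma ell_pos I s : is_ideal I -> flag I s -> ~ I 1 -> (0 < ell I)%N.
Proof. by move=> HI Hflag HI1; apply: (length_is_ell HI Hflag).2; apply: chain_proper. Qed.

Lemma chain_insert I k (J : nat -> A -> Prop) i K :
  (forall j, (j <= k)%N -> is_ideal (J j)) ->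
  (forall x, J 0%N x <-> I x) -> (forall x, J k x) ->
  (forall j, (j < k)%N -> subset_of (J j) (J j.+1) /\ ~ subset_of (J j.+1) (J j)) ->
  (i < k)%N -> is_ideal K -> subset_of (J i) K -> subset_of K (J i.+1) ->
  ~ subset_of K (J i) -> ~ subset_of (J i.+1) K -> chain_of_length I k.+1.
Proof.
move=> HJ HJ0 HJk Hstrict Hik HK HJK HKJ HKnot HJnot.
exists (fun j => if (j <= i)%N then J j else if j == i.+1 then K else J j.-1).
split.
  move=> j Hj /=; case: (leqP j i) => Hji; first by apply: HJ; lia.
  by case: eqP => _ //; apply: HJ; lia.
split => //; split.
  have -> : (k.+1 <= i)%N = false by lia.
  by have -> : (k.+1 == i.+1) = false by apply/eqP; lia.
move=> j Hj /=; case: (ltngtP j i) => Hji.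
- by apply: Hstrict; lia.
- have -> : (j.+1 == i.+1) = false by apply/eqP; lia.
  case: (j =P i.+1) => [-> | Hj1] //=.
  have := Hstrict j.-1 ltac:(lia); rewrite prednK //; lia.
- by rewrite Hji eqxx.
Qed.

Section LocalRing.
Hypothesis Hmax_ideal : is_ideal (@max_ideal A).
Hypothesis Hone_sub : forall a : A, max_ideal a -> (1 - a) \is a GRing.unit.

Section MaximalChain.
Variables (I : A -> Prop) (l : nat) (J : nat -> A -> Prop).
Hypothesis HJ : forall i, (i <= l)%N -> is_ideal (J i).
Hypothesis HJ0 : forall x, J 0%N x <-> I x.
Hypothesis HJl : forall x, J l x.
Hypothesis HJstrict :
  forall i, (i < l)%N -> subset_of (J i) (J i.+1) /\ ~ subset_of (J i.+1) (J i).
Hypothesis HJmax : forall k, chain_of_length I k -> (k <= l)%N.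

Lemma maximal_chain_no_gap i K : (i < l)%N -> is_ideal K ->
  subset_of (J i) K -> subset_of K (J i.+1) -> subset_of K (J i) \/ subset_of (J i.+1) K.
Proof.
move=> Hi HK HJK HKJ; apply: NNPP => Hgap.
have Hlonger := chain_insert HJ HJ0 HJl HJstrict Hi HK HJK HKJ
  (fun H => Hgap (or_introl H)) (fun H => Hgap (or_intror H)).
by have := HJmax Hlonger; rewrite ltnn.
Qed.

Lemma maximal_chain_step i : (i < l)%N ->
  exists g, step (J i) g /\ forall x, J i.+1 x <-> adjoin (J i) g x.
Proof.
move=> Hi; have HJi := HJ (ltnW Hi); have [HJsub HJnot] := HJstrict Hi.
have [g [Jg nJg]] : exists g, J i.+1 g /\ ~ J i g.
  apply: NNPP => Hn; apply: HJnot => x Hx; apply: NNPP => nJx; apply: Hn; exists x; tauto.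
have Hadjoin_sub : forall c, subset_of (adjoin (J i) (c * g)) (J i.+1).
  by move=> c; apply: adjoin_min => //; [apply: HJ | apply: idealMl => //; apply: HJ].
exists g; split.
  move=> a Ha; case: (maximal_chain_no_gap Hi (adjoin_ideal (a * g) HJi)
    (adjoin_sub _ HJi) (Hadjoin_sub a)) => [Hsub | Hsub].
    by apply: Hsub; apply: adjoin_gen.
  have [b Hb] := Hsub g Jg; case: nJg.
  have -> : g = (1 - b * a)^-1 * (g - b * (a * g)).
    rewrite mulrA -[X in _ * (X - _)]mul1r -mulrBl mulKr //.
    by apply: Hone_sub; apply: idealMl.
  exact: idealMl.
have HgJ : subset_of (adjoin (J i) g) (J i.+1) by rewrite -[g]mul1r; apply: Hadjoin_sub.
move=> x; split; last exact: HgJ.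
case: (maximal_chain_no_gap Hi (adjoin_ideal g HJi) (adjoin_sub _ HJi) HgJ)
  => [Hsub | Hsub]; last exact: Hsub.
by case: nJg; apply: Hsub; apply: adjoin_gen.
Qed.

Lemma maximal_chain_flag d : forall i, (i + d)%N = l ->
  exists s, flag (J i) s /\ size s = d.
Proof.
elim: d => [|d IH] i Hid.
  by exists [::]; split => //=; move: Hid; rewrite addn0 => ->.
have Hi : (i < l)%N by lia.
have [g [Hstep HJg]] := maximal_chain_step Hi.
have [s [Hflag Hsize]] := IH i.+1 ltac:(lia).
exists (g :: s); split; last by rewrite /= Hsize.
by split => //; apply: flag_mono Hflag => x /HJg.
Qed.

End MaximalChain.

Lemma length_flag I l : length_is I l -> exists s, flag I s /\ size s = l.
Proof.
move=> [[J [HJ [HJ0 [HJl HJstrict]]]] HJmax].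
have [s [Hflag Hsize]] := maximal_chain_flag HJ HJ0 HJl HJstrict HJmax (add0n l).
by exists s; split => //; apply: flag_mono Hflag => x /HJ0.
Qed.

End LocalRing.
End Length.

Section FlagConstructions.
Variable A : comUnitRingType.
Local Open Scope ring_scope.
Implicit Types (I J : A -> Prop) (g x c : A) (s t : seq A).

Lemma simple_steps_mul c s : forall I0 I, is_ideal I0 -> is_ideal I ->
  (forall x, I0 x -> I (x * c)) -> simple_steps I0 s ->
  simple_steps I [seq h * c | h <- s] /\
  (forall x, adjoin_seq I0 s x -> adjoin_seq I [seq h * c | h <- s] (x * c)).
Proof.
elim: s => [|h s IH] I0 I HI0 HI Hmul //= [Hstep Hsteps].
have Hmul' : forall x, adjoin I0 h x -> adjoin I (h * c) (x * c).
  by move=> x [a Ha]; exists a; rewrite mulrA -mulrBl; apply: Hmul.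
have [IH1 IH2] := IH _ _ (adjoin_ideal h HI0) (adjoin_ideal (h * c) HI) Hmul' Hsteps.
by split; [split => // a Ha; rewrite mulrA; apply/Hmul/Hstep | ].
Qed.

Lemma flag_colon I x t s : is_ideal I ->
  flag (fun y => I (y * x)) t -> flag (adjoin I x) s ->
  flag I ([seq h * x | h <- t] ++ s).
Proof.
move=> HI Ht Hs; apply/flag_cat.
have [Ht1 Ht2] := proj1 (flagE _ _) Ht.
have [S1 S2] := simple_steps_mul (colon_ideal x HI) HI (fun y Hy => Hy) Ht1.
split => //; apply: flag_mono Hs.
apply: adjoin_min; [exact: adjoin_seq_ideal | exact: adjoin_seq_sub |].
by have := S2 _ Ht2; rewrite mul1r.
Qed.

End FlagConstructions.

Section ExtendedIdeals.
Variables A B : comUnitRingType.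
Local Open Scope ring_scope.
Variable f : A -> B.
Hypothesis fM : forall x y, f (x * y) = f x * f y.
Hypothesis fB : forall x y, f (x - y) = f x - f y.
Hypothesis f1 : f 1 = 1.

Definition extension (X : A -> Prop) : B -> Prop :=
  gen_ideal (fun y => exists x, X x /\ y = f x).

Lemma extension_ideal X : is_ideal (extension X).
Proof. exact: gen_is_ideal. Qed.

Lemma extension_of X x : X x -> extension X (f x).
Proof. by move=> Hx; apply: gen_sub; exists x. Qed.

Lemma extension_gen X : subset_of (extension (gen_ideal X)) (extension X).
Proof.
apply: gen_min; first exact: extension_ideal.
have f0 : f 0 = 0 by have := fB 1 1; rewrite !subrr.
have Hpre : is_ideal (fun x => extension X (f x)).
  split; first by rewrite f0; exact: (ideal0 (extension_ideal X)).
  split; first by move=> x y Hx Hy; rewrite fB; exact: (idealB (extension_ideal X) Hx Hy).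
  by move=> a x Hx; rewrite fM; exact: (idealMl (f a) (extension_ideal X) Hx).
by move=> y [x [Hx ->]]; apply: (gen_min Hpre) Hx => z; apply: extension_of.
Qed.

Lemma flag_extension J gs hs : is_ideal J -> flag J gs -> flag (extension (@max_ideal A)) hs ->
  flag (extension J) [seq h * f g | g <- gs, h <- hs].
Proof.
move=> HJ Hgs Hhs; elim: gs J HJ Hgs => [|g gs IH] J HJ /=.
  by move=> HJ1; rewrite -f1; apply: extension_of.
case=> Hstep Hflag; apply/flag_cat.
have [Hhs1 Hhs2] := proj1 (flagE _ _) Hhs.
have Hmul : forall y, extension (@max_ideal A) y -> extension J (y * f g).
  apply: (gen_min (colon_ideal (f g) (extension_ideal J))).
  by move=> y [x [Hx ->]]; rewrite -fM; apply: extension_of; apply: Hstep.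
have [S1 S2] := simple_steps_mul (extension_ideal _) (extension_ideal _) Hmul Hhs1.
split => //; apply: flag_mono (IH _ (adjoin_ideal g HJ) Hflag).
have HJhs := adjoin_seq_ideal [seq h * f g | h <- hs] (extension_ideal J).
apply: gen_min => // y [x [[a Ha] ->]].
have -> : f x = f (x - a * g) + f a * f g by rewrite fB fM subrK.
apply: idealD => //; first by apply: (adjoin_seq_sub _ (extension_ideal J)); apply: extension_of.
by apply: idealMl => //; have := S2 _ Hhs2; rewrite mul1r.
Qed.

End ExtendedIdeals.

Lemma sum_update n (e : nat -> nat) i v : (i < n)%N ->
  (\sum_(j < n) (if (j : nat) == i then v else e j) + e i = \sum_(j < n) e j + v)%N.
Proof.
move=> Hi; rewrite (bigD1 (Ordinal Hi)) //= [in RHS](bigD1 (Ordinal Hi)) //= eqxx.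
rewrite (eq_bigr (fun j : 'I_n => e j)) => [|j Hj]; first lia.
by rewrite ifN //; apply: contra Hj => /eqP Hj; apply/eqP/val_inj.
Qed.

Lemma sum_term_le n (e : nat -> nat) i : (i < n)%N -> (e i <= \sum_(j < n) e j)%N.
Proof. by move=> Hi; rewrite (bigD1 (Ordinal Hi)) //= leq_addr. Qed.

Section PrimaryIdeals.
Variable A : comUnitRingType.
Local Open Scope ring_scope.
Variable xs : seq A.
Hypothesis Hgen : subset_of (@max_ideal A) (gen_ideal (fun y => y \in xs)).

Lemma flag_small_exponents (I : A -> Prop) (e : nat -> nat) : is_ideal I ->
  (forall i, (i < size xs)%N -> (e i <= 1)%N) ->
  (forall i, (i < size xs)%N -> I (nth 0 xs i ^+ e i)) -> flag I [:: 1].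
Proof.
move=> HI Hsmall He; split; last exact: adjoin_gen.
move=> a Ha; rewrite mulr1; apply: (gen_min HI) (Hgen Ha) => y Hy.
rewrite -(nth_index 0 Hy); set i := index y xs.
have Hi : (i < size xs)%N by rewrite index_mem.
move: (He i Hi) (Hsmall i Hi); case: (e i) => [|[|//]] /=.
  by rewrite expr0 => H1 _; apply: ideal_full.
by rewrite expr1.
Qed.

(* An ideal containing powers [x_i ^ e_i] of all generators of the maximal
   ideal has a flag; induction on [\sum e_i], splitting [I] into [I : x_i]
   and [I + A x_i]. *)
Lemma flag_exponents d : forall (I : A -> Prop) (e : nat -> nat), is_ideal I ->
  (\sum_(i < size xs) e i <= d)%N ->
  (forall i, (i < size xs)%N -> I (nth 0 xs i ^+ e i)) -> exists s, flag I s.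
Proof.
elim: d => [|d IH] I e HI Hsum He;
  have [[i [Hi He2]] | Hsmall] := classic (exists i, (i < size xs)%N /\ (1 < e i)%N);
  try (exists [:: 1]; apply: (flag_small_exponents HI _ He) => i Hi;
       apply: NNPP => Hlarge; apply: Hsmall; exists i; split => //; lia).
  by have := sum_term_le e Hi; lia.
pose x := nth 0 xs i.
pose e_colon j := if j == i then (e i).-1 else e j.
pose e_adjoin j := if j == i then 1%N else e j.
have Hsum_colon : (\sum_(j < size xs) e_colon j + e i = \sum_(j < size xs) e j + (e i).-1)%N
  := sum_update e _ Hi.
have Hsum_adjoin : (\sum_(j < size xs) e_adjoin j + e i = \sum_(j < size xs) e j + 1)%N
  := sum_update e _ Hi.
have [t Ht] : exists t, flag (fun y => I (y * x)) t.
  apply: (IH _ e_colon (colon_ideal x HI)); first lia.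
  move=> j Hj; rewrite /e_colon; case: eqP => [->|_]; last by apply: idealMr => //; apply: He.
  by rewrite -exprSr prednK; [exact: He | lia].
have [s Hs] : exists s, flag (adjoin I x) s.
  apply: (IH _ e_adjoin (adjoin_ideal x HI)); first lia.
  move=> j Hj; rewrite /e_adjoin; case: eqP => [->|_]; first by rewrite expr1; apply: adjoin_gen.
  by apply: adjoin_sub => //; apply: He.
by exists ([seq h * x | h <- t] ++ s); apply: flag_colon.
Qed.

End PrimaryIdeals.

Section NoetherianLocal.
Variable A : comUnitRingType.
Local Open Scope ring_scope.
Hypothesis HN : is_noetherian A.

Lemma noetherian_fg (I : A -> Prop) : is_ideal I ->
  exists xs : seq A, (forall x, x \in xs -> I x) /\ subset_of I (gen_ideal (fun y => y \in xs)).
Proof.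
move=> HI; apply: NNPP => Hn.
have Hnew : forall xs : seq A, (forall x, x \in xs -> I x) ->
    exists y, I y /\ ~ gen_ideal (fun z => z \in xs) y.
  move=> xs Hxs; apply: NNPP => H; apply: Hn; exists xs; split => // y Hy.
  by apply: NNPP => H2; apply: H; exists y.
pose next (xs : seq A) :=
  epsilon (inhabits 0) (fun y => I y /\ ~ gen_ideal (fun z => z \in xs) y) :: xs.
pose gens n := iter n next [::].
have Hgens : forall n x, x \in gens n -> I x.
  elim=> [|n IHn] x //=; rewrite inE => /orP [/eqP ->|]; last exact: IHn.
  by have [] := epsilon_spec (inhabits 0) _ (Hnew _ IHn).
pose C n := gen_ideal (fun z => z \in gens n).
have HCmono : forall n, subset_of (C n) (C n.+1).
  move=> n; apply: gen_min; first exact: gen_is_ideal.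
  by move=> y Hy; apply: gen_sub; rewrite /= inE Hy orbT.
have [N HN'] := HN (fun n => gen_is_ideal _) HCmono.
have [_ Hnot] := epsilon_spec (inhabits 0) _ (Hnew _ (Hgens N)).
by apply: Hnot; apply: (HN' N.+1 (leqnSn _)); apply: gen_sub; rewrite /= inE eqxx.
Qed.

Lemma noetherian_maximal (I : A -> Prop) : is_ideal I -> ~ I 1 ->
  exists M, is_maximal_ideal M /\ subset_of I M.
Proof.
move=> HI HI1; apply: NNPP => Hn.
pose bigger (J J' : A -> Prop) :=
  is_ideal J' /\ ~ J' 1 /\ subset_of J J' /\ ~ subset_of J' J.
have Hbigger : forall J, is_ideal J -> ~ J 1 -> subset_of I J -> exists J', bigger J J'.
  move=> J HJ HJ1 HIJ; apply: NNPP => H; apply: Hn; exists J; do 3 split => //.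
  move=> J' HJ' HJJ'; have [|HJ'1] := classic (J' 1); [by right | left].
  by apply: NNPP => H2; apply: H; exists J'.
pose next J := epsilon (inhabits (fun _ : A => False)) (bigger J).
pose C n := iter n next I.
have HC : forall n, is_ideal (C n) /\ ~ C n 1 /\ subset_of I (C n).
  elim=> [|n [HCn [HCn1 HICn]]] /=; first by split => //; split => // x.
  have [HC' [HC'1 [HCC' _]]] := epsilon_spec (inhabits (fun _ : A => False)) (bigger _) (Hbigger _ HCn HCn1 HICn).
  by split => //; split => // x Hx; apply/HCC'/HICn.
have HCmono : forall n, subset_of (C n) (C n.+1).
  move=> n; have [HCn [HCn1 HICn]] := HC n.
  by have [_ [_ []]] := epsilon_spec (inhabits (fun _ : A => False)) (bigger _) (Hbigger _ HCn HCn1 HICn).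
have [N HN'] := HN (fun n => (HC n).1) HCmono.
have [HCN [HCN1 HICN]] := HC N.
have [_ [_ [_ Hstrict]]] := epsilon_spec (inhabits (fun _ : A => False)) (bigger _) (Hbigger _ HCN HCN1 HICN).
by apply: Hstrict; apply: (HN' N.+1 (leqnSn _)).
Qed.

Hypothesis HL : is_local A.

Lemma nonunits_maximal : exists M, is_maximal_ideal M /\ forall x, @max_ideal A x <-> M x.
Proof.
have [M [HMmax Huniq]] := HL; have [HM [HM1 _]] := HMmax.
exists M; split => // x; split => Hx; last first.
  by move=> Hunit; apply: HM1; rewrite -(mulVr Hunit); apply: idealMl.
pose P y := exists a, y = a * x.
have HP : is_ideal P.
  split; first by exists 0; rewrite mul0r.
  split; first by move=> y z [a ->] [b ->]; exists (a - b); rewrite mulrBl.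
  by move=> c y [a ->]; exists (c * a); rewrite mulrA.
have HP1 : ~ P 1 by move=> [a Ha]; apply: Hx; apply/unitrPr; exists a; rewrite mulrC.
have [M' [HM' HPM']] := noetherian_maximal HP HP1.
by apply: (Huniq M' HM').2; apply: HPM'; exists 1; rewrite mul1r.
Qed.

Lemma nonunits_ideal : is_ideal (@max_ideal A).
Proof.
have [M [[HM _] HMeq]] := nonunits_maximal.
split; first by apply/HMeq; apply: ideal0.
split; first by move=> x y /HMeq Hx /HMeq Hy; apply/HMeq; apply: idealB.
by move=> a x /HMeq Hx; apply/HMeq; apply: idealMl.
Qed.

Lemma one_sub_nonunit (a : A) : max_ideal a -> (1 - a) \is a GRing.unit.
Proof.
have [M [[HM [HM1 _]] HMeq]] := nonunits_maximal.
move=> /HMeq Ha; apply: NNPP => /HMeq Hb; apply: HM1.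
by rewrite -(subrK a 1); apply: idealD.
Qed.

End NoetherianLocal.

Section Iterates.
Variable R : comUnitRingType.
Local Open Scope ring_scope.
Variable f : {rmorphism R -> R}.

Lemma iterM k x y : iter k f (x * y) = iter k f x * iter k f y.
Proof. by elim: k => //= k ->; rewrite rmorphM. Qed.

Lemma iterB k x y : iter k f (x - y) = iter k f x - iter k f y.
Proof. by elim: k => //= k ->; rewrite rmorphB. Qed.

Lemma iter1 k : iter k f 1 = 1.
Proof. by elim: k => //= k ->; rewrite rmorph1. Qed.

Lemma iter0 k : iter k f 0 = 0.
Proof. by elim: k => //= k ->; rewrite rmorph0. Qed.

Lemma iter_unit k x : x \is a GRing.unit -> iter k f x \is a GRing.unit.
Proof. by move=> Hx; elim: k => //= k IH; apply: rmorph_unit. Qed.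

End Iterates.

Section SurjectiveTransfer.
Variables A S : comUnitRingType.
Local Open Scope ring_scope.
Variable pi : {rmorphism A -> S}.
Hypothesis Hsurj : forall s : S, exists x : A, pi x = s.

Definition preimage (t : S) : A := epsilon (inhabits 0) (fun x => pi x = t).

Lemma preimageK t : pi (preimage t) = t.
Proof. exact: epsilon_spec (inhabits 0) (fun x => pi x = t) (Hsurj t). Qed.

Definition pushforward (T : A -> Prop) : S -> Prop := fun s => exists x, pi x = s /\ T x.

Section Pushforward.
Variable T : A -> Prop.
Hypothesis HT : is_ideal T.
Hypothesis HkerT : forall x, pi x = 0 -> T x.

Lemma pushforward_pullback x : pushforward T (pi x) -> T x.
Proof.
move=> [y [Hxy Ty]]; have -> : x = (x - y) + y by rewrite subrK.
by apply: idealD => //; apply: HkerT; rewrite rmorphB Hxy subrr.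
Qed.

Lemma pushforward_ideal : is_ideal (pushforward T).
Proof.
split; first by exists 0; rewrite rmorph0; split => //; apply: ideal0.
split.
  move=> _ _ [x [<- Tx]] [y [<- Ty]].
  by exists (x - y); rewrite rmorphB; split => //; apply: idealB.
move=> c _ [x [<- Tx]]; have [a <-] := Hsurj c.
by exists (a * x); rewrite rmorphM; split => //; apply: idealMl.
Qed.

End Pushforward.

Lemma nonunit_of_image x : @max_ideal S (pi x) -> max_ideal x.
Proof. by move=> Hx Hunit; apply/Hx/rmorph_unit. Qed.

Lemma flag_map s : forall (IA : A -> Prop) (IS : S -> Prop),
  (forall x, IA x -> IS (pi x)) -> flag IA s -> flag IS (map pi s).
Proof.
elim: s => [|g s IH] IA IS H /=; first by move=> H1; rewrite -(rmorph1 pi); apply: H.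
case=> Hstep Hflag; split.
  move=> a Ha; have [x Hxa] := Hsurj a; rewrite -Hxa in Ha *.
  by rewrite -rmorphM; apply/H/Hstep/nonunit_of_image.
by apply: IH Hflag => x [a Ha]; exists (pi a); rewrite -rmorphM -rmorphB; apply: H.
Qed.

Section KernelOfNonunits.
Hypothesis Hmax : is_ideal (@max_ideal A).
Hypothesis Hone_sub : forall a : A, max_ideal a -> (1 - a) \is a GRing.unit.
Hypothesis Hker : forall x, pi x = 0 -> max_ideal x.

Lemma nonunit_image x : max_ideal x -> @max_ideal S (pi x).
Proof.
move=> Hx /unitrPr [t Ht]; have [y Hyt] := Hsurj t; rewrite -Hyt in Ht.
have H1 : max_ideal (x * y - 1) by apply: Hker; rewrite rmorphB rmorphM rmorph1 Ht subrr.
have : @max_ideal A (x * y - (x * y - 1)) by apply: idealB => //; apply: idealMr.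
by rewrite opprB addrC subrK; apply; apply: unitr1.
Qed.

Lemma image_nonunits_ideal : is_ideal (@max_ideal S).
Proof.
split; first by rewrite /max_ideal unitr0.
split.
  move=> s t; have [x <-] := Hsurj s; have [y <-] := Hsurj t.
  move=> /nonunit_of_image Hx /nonunit_of_image Hy.
  by rewrite -rmorphB; apply: nonunit_image; apply: idealB.
move=> c s; have [x <-] := Hsurj s; have [a <-] := Hsurj c.
move=> /nonunit_of_image Hx.
by rewrite -rmorphM; apply: nonunit_image; apply: idealMl.
Qed.

Lemma image_one_sub (a : S) : max_ideal a -> (1 - a) \is a GRing.unit.
Proof.
have [x <-] := Hsurj a; move=> /nonunit_of_image Hx.
by rewrite -(rmorph1 pi) -rmorphB; apply/rmorph_unit/Hone_sub.
Qed.

Lemma flag_preimage s : forall (IA : A -> Prop) (IS : S -> Prop),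
  (forall x, IS (pi x) -> IA x) -> flag IS s -> flag IA (map preimage s).
Proof.
elim: s => [|g s IH] IA IS H /=; first by move=> H1; apply: H; rewrite rmorph1.
case=> Hstep Hflag; split.
  by move=> a Ha; apply: H; rewrite rmorphM preimageK; apply/Hstep/nonunit_image.
apply: IH Hflag => x [b Hb]; have [c Hc] := Hsurj b; rewrite -Hc in Hb.
by exists c; apply: H; rewrite rmorphB rmorphM preimageK.
Qed.

End KernelOfNonunits.
End SurjectiveTransfer.

Lemma h_alg_eq (A S : comUnitRingType) (phi : {rmorphism A -> A}) (psi : {rmorphism S -> S}) :
  (forall h, Un_cv (fun k => Rdiv (ln (INR (lambda_iter phi k.+1))) (INR k.+1)) h <->
             Un_cv (fun k => Rdiv (ln (INR (lambda_iter psi k.+1))) (INR k.+1)) h) ->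
  h_alg phi = h_alg psi.
Proof.
move=> Hiff; rewrite /h_alg; congr (epsilon _ _).
by apply: functional_extensionality => h; apply: propositional_extensionality.
Qed.

Section SelfMap.
Variable A : comUnitRingType.
Local Open Scope ring_scope.
Variable phi : {rmorphism A -> A}.
Hypothesis HN : is_noetherian A.
Hypothesis HL : is_local A.
Hypothesis Hphi : finite_length_selfmap phi.

Lemma kernel_chain_stable : exists N, forall n, (N <= n)%N ->
  forall x, iter n.+1 phi x = 0 -> iter n phi x = 0.
Proof.
pose K m x := iter m phi x = 0.
have HK : forall m, is_ideal (K m).
  move=> m; split; first by rewrite /K iter0.
  split; first by move=> x y Hx Hy; rewrite /K iterB Hx Hy subrr.
  by move=> a x Hx; rewrite /K iterM Hx mulr0.
have HKmono : forall m, subset_of (K m) (K m.+1) by move=> m x Hx; rewrite /K /= Hx rmorph0.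
have [N HKN] := HN HK HKmono.
exists N => n Hn x Hx.
by rewrite -(subnK Hn) iterD (HKN n.+1 (leqW Hn) x Hx) iter0.
Qed.

Let Hmax := nonunits_ideal HN HL.
Let Hone_sub := one_sub_nonunit HN HL.

Definition iter_ideal (k : nat) : A -> Prop :=
  gen_ideal (image_of (iter k phi) (@max_ideal A)).

Lemma iter_nonunit k x : max_ideal x -> max_ideal (iter k phi x).
Proof. by move=> Hx; elim: k => //= k IH; apply: Hphi.1; exists (iter k phi x). Qed.

(* [phi(m)A] is [m]-primary, hence has a flag. *)
Lemma flag_image_max : exists s, flag (iter_ideal 1) s.
Proof.
have [HQ [_ [_ Hrad]]] := Hphi.2.
have [xs [Hxs Hgen]] := noetherian_fg HN Hmax.
pose power i := epsilon (inhabits 0%N) (fun k => iter_ideal 1 (nth 0 xs i ^+ k)).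
apply: (flag_exponents Hgen HQ (leqnn (\sum_(i < size xs) power i))) => i Hi.
apply: (epsilon_spec (inhabits 0%N) (fun k => iter_ideal 1 (nth 0 xs i ^+ k))).
by apply/(Hrad _); apply/Hxs/mem_nth.
Qed.

Lemma flag_iter_ideal k : exists s, flag (iter_ideal k) s.
Proof.
elim: k => [|k [gs Hgs]].
  exists [:: 1]; split; last exact: adjoin_gen (gen_is_ideal _).
  by move=> a Ha; rewrite mulr1; apply: gen_sub; exists a.
have [hs Hhs] := flag_image_max.
have Hext := flag_extension (rmorphM phi) (rmorphB phi) (rmorph1 phi)
  (gen_is_ideal _) Hgs Hhs.
eexists; apply: flag_mono Hext => x /(extension_gen (rmorphM phi) (rmorphB phi)).
apply: gen_min; first exact: gen_is_ideal.
by move=> _ [_ [[y [Hy ->]] ->]]; apply: gen_sub; exists y.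
Qed.

Section InducedMap.
Variables (n : nat) (S : comUnitRingType).
Variables (pi : {rmorphism A -> S}) (psi : {rmorphism S -> S}).
Hypothesis Hsurj : forall s : S, exists x : A, pi x = s.
Hypothesis Hker : forall x : A, pi x = 0 <-> iter n phi x = 0.
Hypothesis Hcomm : forall x : A, psi (pi x) = pi (phi x).

Lemma pi_iter k x : pi (iter k phi x) = iter k psi (pi x).
Proof. by elim: k => //= k IH; rewrite -Hcomm IH. Qed.

Lemma induced_injective :
  (forall x, iter n.+1 phi x = 0 -> iter n phi x = 0) -> injective psi.
Proof.
move=> Hstable s t; have [x <-] := Hsurj s; have [y <-] := Hsurj t.
rewrite !Hcomm => Hxy; apply/eqP; rewrite -subr_eq0 -rmorphB; apply/eqP/Hker/Hstable.
by rewrite iterSr; apply/Hker; rewrite !rmorphB Hxy subrr.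
Qed.

Lemma induced_integral : integral_selfmap phi -> integral_selfmap psi.
Proof.
move=> Hint s; have [x <-] := Hsurj s; have [q [Hq Hroot]] := Hint x.
exists (map_poly pi q); split; first exact: monic_map.
have -> : map_poly psi (map_poly pi q) = map_poly pi (map_poly phi q).
  by rewrite -!map_poly_comp; apply: eq_map_poly => z /=; rewrite Hcomm.
by rewrite /root horner_map (eqP Hroot) rmorph0 eqxx.
Qed.

Lemma ker_nonunit x : pi x = 0 -> max_ideal x.
Proof. by move=> /Hker H0 /(iter_unit phi n); rewrite H0 unitr0. Qed.

Let HmaxS := image_nonunits_ideal Hsurj Hmax ker_nonunit.
Let Hone_subS := image_one_sub Hsurj Hone_sub.

Definition quot_iter_ideal (k : nat) : S -> Prop :=
  gen_ideal (image_of (iter k psi) (@max_ideal S)).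

Lemma quot_length_le k :
  (exists s, flag (quot_iter_ideal k) s) /\ (lambda_iter psi k <= lambda_iter phi k)%N.
Proof.
have [s0 Hs0] := flag_iter_ideal k.
have [s [Hs Hsize]] := length_flag Hmax Hone_sub (length_is_ell (gen_is_ideal _) Hs0).
have Hflag : flag (quot_iter_ideal k) (map pi s).
  apply: (flag_map Hsurj) Hs => x Hx.
  have Hpre : is_ideal (fun y => quot_iter_ideal k (pi y)).
    split; first by rewrite rmorph0; apply: ideal0; apply: gen_is_ideal.
    split; first by move=> y z Hy Hz; rewrite rmorphB; exact: (idealB (gen_is_ideal _) Hy Hz).
    by move=> a y Hy; rewrite rmorphM; exact: (idealMl _ (gen_is_ideal _) Hy).
  apply: (gen_min Hpre) Hx => _ [y [Hy ->]].
  rewrite pi_iter; apply: gen_sub; exists (pi y); split => //.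
  exact: nonunit_image Hsurj Hmax ker_nonunit _ Hy.
split; first by exists (map pi s).
rewrite /lambda_iter -Hsize -(size_map pi); apply: ell_le_flag Hflag; exact: gen_is_ideal.
Qed.

(* [psi^k(m_S)S] is a proper ideal, so [lambda(psi^k) >= 1]. *)
Lemma lambda_quot_pos k : (0 < lambda_iter psi k)%N.
Proof.
have [[s Hs] _] := quot_length_le k; rewrite /lambda_iter; apply: (ell_pos (gen_is_ideal _) Hs).
move=> H1; have Hsub : subset_of (quot_iter_ideal k) (@max_ideal S).
  apply: gen_min HmaxS _ => _ [t [Ht ->]]; have [x Hx] := Hsurj t; rewrite -Hx in Ht *.
  rewrite -pi_iter; apply: (nonunit_image Hsurj Hmax ker_nonunit).
  exact/iter_nonunit/(nonunit_of_image Ht).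
exact: Hsub _ H1 (unitr1 S).
Qed.

Definition shifted_ideal (k : nat) : A -> Prop := fun x => iter_ideal (n + k) (iter n phi x).

Lemma shifted_ideal_ideal k : is_ideal (shifted_ideal k).
Proof.
split; first by rewrite /shifted_ideal iter0; apply: ideal0; apply: gen_is_ideal.
split; first by move=> x y Hx Hy; rewrite /shifted_ideal iterB; exact: (idealB (gen_is_ideal _) Hx Hy).
by move=> a x Hx; rewrite /shifted_ideal iterM; exact: (idealMl _ (gen_is_ideal _) Hx).
Qed.

Lemma quot_iter_ideal_pullback k x : quot_iter_ideal k (pi x) -> shifted_ideal k x.
Proof.
have HT := shifted_ideal_ideal k.
have HkerT : forall x, pi x = 0 -> shifted_ideal k x.
  by move=> y /Hker H0; rewrite /shifted_ideal H0; apply: ideal0; apply: gen_is_ideal.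
move=> Hx; apply: (pushforward_pullback HT HkerT).
apply: (gen_min (pushforward_ideal Hsurj HT)) Hx => _ [t [Ht ->]].
have [z Hz] := Hsurj t; rewrite -Hz in Ht *.
exists (iter k phi z); split; first exact: pi_iter.
rewrite /shifted_ideal -iterD; apply: gen_sub; exists z; split => //.
exact: nonunit_of_image Ht.
Qed.

Lemma lambda_submult k :
  (lambda_iter phi (n + k) <= lambda_iter phi n * lambda_iter psi k)%N.
Proof.
have [[sS0 HsS0] _] := quot_length_le k.
have [sS [HsS HsizeS]] :=
  length_flag HmaxS Hone_subS (length_is_ell (gen_is_ideal _) HsS0).
have HT : flag (shifted_ideal k) (map (preimage pi) sS).
  exact: (flag_preimage Hsurj Hmax ker_nonunit (@quot_iter_ideal_pullback k) HsS).
have [sA0 HsA0] := flag_iter_ideal n.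
have [sA [HsA HsizeA]] := length_flag Hmax Hone_sub (length_is_ell (gen_is_ideal _) HsA0).
have Hext := flag_extension (@iterM _ phi n) (@iterB _ phi n) (iter1 phi n)
  (shifted_ideal_ideal k) HT HsA.
have Hflag : flag (iter_ideal (n + k)) [seq h * iter n phi g | g <- map (preimage pi) sS, h <- sA].
  by apply: flag_mono Hext; apply: gen_min => [|_ [x [Hx ->]]] //; apply: gen_is_ideal.
have := ell_le_flag (gen_is_ideal _) Hflag.
by rewrite size_allpairs size_map HsizeS HsizeA mulnC.
Qed.

Lemma entropy_quotient : h_alg phi = h_alg psi.
Proof.
apply: h_alg_eq; apply: (log_growth_compare (lambda_iter phi) (lambda_iter psi) n).
- by move=> k; apply/leP; apply: lambda_quot_pos.
- by move=> k; apply/leP; case: (quot_length_le k).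
- by move=> k; apply/leP; apply: lambda_submult.
Qed.

End InducedMap.
End SelfMap.

Theorem mainTheorem16 (A : comUnitRingType) (phi : {rmorphism A -> A})
  (HnoethA : is_noetherian A) (HlocA : is_local A)
  (Hphi : finite_length_selfmap phi) :
  (* phi(ker phi^n) is contained in ker phi^n *)
  (forall n : nat, (1 <= n)%N ->
     forall x : A, iter n phi x = 0%R -> iter n phi (phi x) = 0%R) /\
  (* (a) entropy is preserved on passing to A / ker phi^n *)
  (forall n : nat, (1 <= n)%N ->
     forall (S : comUnitRingType) (pi : {rmorphism A -> S}) (psi : {rmorphism S -> S}),
       (forall s : S, exists x : A, pi x = s) ->
       (forall x : A, pi x = 0%R <-> iter n phi x = 0%R) ->
       (forall x : A, psi (pi x) = pi (phi x)) ->
       h_alg phi = h_alg psi) /\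
  (* (b) the induced map is injective for all large n *)
  (exists N : nat, forall n : nat, (N <= n)%N ->
     forall (S : comUnitRingType) (pi : {rmorphism A -> S}) (psi : {rmorphism S -> S}),
       (forall s : S, exists x : A, pi x = s) ->
       (forall x : A, pi x = 0%R <-> iter n phi x = 0%R) ->
       (forall x : A, psi (pi x) = pi (phi x)) ->
       injective psi) /\
  (* (c) integrality passes to the induced map *)
  (integral_selfmap phi ->
   forall n : nat, (1 <= n)%N ->
     forall (S : comUnitRingType) (pi : {rmorphism A -> S}) (psi : {rmorphism S -> S}),
       (forall s : S, exists x : A, pi x = s) ->
       (forall x : A, pi x = 0%R <-> iter n phi x = 0%R) ->
       (forall x : A, psi (pi x) = pi (phi x)) ->
       integral_selfmap psi).
Proof.
split; first by move=> n _ x Hx; rewrite -iterSr /= Hx rmorph0.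
split.
  by move=> n _ S pi psi Hsurj Hker Hcomm; apply: entropy_quotient Hsurj Hker Hcomm.
split.
  have [N Hstable] := kernel_chain_stable phi HnoethA.
  exists N => n Hn S pi psi Hsurj Hker Hcomm.
  by apply: (induced_injective Hsurj Hker Hcomm); apply: Hstable.
by move=> Hint n _ S pi psi Hsurj _ Hcomm; apply: induced_integral Hsurj Hcomm Hint.
Qed.
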